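(* Let $c_n$ denote the minimal Colless index among rooted binary trees with $n$ leaves. Then: (1) for every integer $k\geq 0$, $c_{2^k+1}=k$; (2) for every integer $k\geq 1$, $c_{2^k-1}=k-1$; (3) for every integer $k\geq 1$ and every $j\in\{1,\dots,2^{k-1}-1\}$, $c_{2^{k-1}+j}=c_{2^k-j}$.
   Context: A rooted binary tree with $n\geq 2$ leaves is a rooted tree whose root has degree 2 and all other internal nodes have degree 3; for $n=1$ it is a single node. For an internal node $v$ with children $v_1,v_2$, let $\kappa(v_i)$ be the number of leaves descending from $v_i$ ($1$ if a leaf). The Colless index is $\mathcal{C}(T)=\sum_v|\kappa(v_1)-\kappa(v_2)|$ over internal nodes $v$. *)

From mathcomp Require Import all_boot.
From mathcomp Require Import boolp.

Set Implicit Arguments. Unset Strict Implicit. Unset Printing Implicit Defensive.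

(* A child order is recorded, which is harmless: the Colless index and the
   leaf count are symmetric in the two children, so minimal values agree
   with those over unordered (phylogenetic) trees. *)
Inductive btree : Type :=
| Leaf : btree
| Node : btree -> btree -> btree.

Fixpoint leaves (t : btree) : nat :=
  match t with
  | Leaf => 1
  | Node l r => leaves l + leaves r
  end.

Fixpoint colless (t : btree) : nat :=
  match t with
  | Leaf => 0
  | Node l r => (maxn (leaves l) (leaves r) - minn (leaves l) (leaves r)) + colless l + colless r
  end.

(* A caterpillar with m.+1 leaves: witnesses existence of trees with any
   positive number of leaves. *)
Fixpoint caterpillar (m : nat) : btree :=
  match m with
  | 0 => Leaf
  | m'.+1 => Node (caterpillar m') Leaf
  end.

Lemma leaves_caterpillar m : leaves (caterpillar m) = m.+1.
Proof. by elim: m => //= m ->; rewrite addn1. Qed.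

Lemma ex_colless_value (m : nat) :
  exists c, `[< exists t, leaves t = m.+1 /\ colless t = c >].
Proof.
exists (colless (caterpillar m)); apply/asboolP.
by exists (caterpillar m); rewrite leaves_caterpillar.
Qed.

Definition min_colless_succ (m : nat) : nat := ex_minn (ex_colless_value m).

(* c_n : minimal Colless index among rooted binary trees with n leaves
   (n >= 1; the value at n = 0, where no tree exists, is an unused default 0). *)
Definition min_colless (n : nat) : nat :=
  match n with
  | 0 => 0
  | m.+1 => min_colless_succ m
  end.

From mathcomp Require Import all_boot.
From mathcomp Require Import boolp zify.

Set Implicit Arguments.
Unset Strict Implicit.
Unset Printing Implicit Defensive.

(* The minimum c_n is the solution f (= bal_colless) of the recurrence
   f 1 = 0, f (2n) = 2 f n, f (2n+1) = f n + f (n+1) + 1, i.e. the Colless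
   index of the tree that splits its leaves as evenly as possible at every
   node. Minimality is the merge inequality f (a + b) <= f a + f b + |a - b|,
   proved by strong induction on a + b after a parity case split: halving
   both parts reduces it to one or two instances on about (a + b) / 2 leaves.
   The closed forms at 2^k +- 1 and the mirror symmetry
   f (2^k + j) = f (2^(k+1) - j) then follow from the recurrence by
   induction on k. *)

Fixpoint bal_colless_fuel (fuel n : nat) : nat :=
  match fuel with
  | 0 => 0
  | fuel.+1 =>
      if n <= 1 then 0
      else if odd n then
        bal_colless_fuel fuel n./2 + bal_colless_fuel fuel n./2.+1 + 1
      else 2 * bal_colless_fuel fuel n./2
  end.

(* Fuel n suffices: every recursive call at least halves the argument. *)
Definition bal_colless (n : nat) : nat := bal_colless_fuel n n.

Lemma bal_colless_fuel_eq fuel1 fuel2 n : n <= fuel1 -> n <= fuel2 ->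
  bal_colless_fuel fuel1 n = bal_colless_fuel fuel2 n.
Proof.
elim: fuel1 fuel2 n => [|fuel1 IH] [|fuel2] n le_n1 le_n2;
  try by case: n le_n1 le_n2.
rewrite /=; case: leqP => // n_gt1.
have lt_half : n./2 < n by rewrite -divn2; lia.
case: ifP => n_odd; last by rewrite (IH fuel2) //; lia.
have lt_uphalf : n./2.+1 < n by have := odd_double_half n; rewrite n_odd; lia.
by rewrite !(IH fuel2) //; lia.
Qed.

Lemma bal_colless_fuelE fuel n : n <= fuel -> bal_colless_fuel fuel n = bal_colless n.
Proof. by move=> le_n; apply: bal_colless_fuel_eq. Qed.

Lemma bal_collessE n : 1 < n ->
  bal_colless n = if odd n then bal_colless n./2 + bal_colless n./2.+1 + 1
                  else 2 * bal_colless n./2.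
Proof.
case: n => // m m_gt0; rewrite {1}/bal_colless.
rewrite [bal_colless_fuel _ _]/(bal_colless_fuel m.+1 m.+1) -/bal_colless_fuel ifF; last by lia.
have le_half : m.+1./2 <= m by rewrite -divn2; lia.
rewrite bal_colless_fuelE //; case: ifP => // m_odd.
by rewrite bal_colless_fuelE //; have := odd_double_half m.+1; rewrite m_odd; lia.
Qed.

Lemma bal_colless1 : bal_colless 1 = 0. Proof. by []. Qed.

Lemma bal_colless_double n : bal_colless (2 * n) = 2 * bal_colless n.
Proof.
case: n => // n; rewrite bal_collessE; last by lia.
by rewrite mul2n odd_double doubleK.
Qed.

Lemma bal_colless_odd n : 0 < n ->
  bal_colless (2 * n + 1) = bal_colless n + bal_colless (n + 1) + 1.
Proof.
move=> n_gt0; rewrite bal_collessE; last by lia.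
by rewrite mul2n addn1 oddS odd_double /= uphalf_double [n + 1]addn1.
Qed.

Variant parity_spec : nat -> Prop :=
  | ParityEven x : parity_spec (2 * x)
  | ParityOdd x : parity_spec (2 * x + 1).

Lemma parityP n : parity_spec n.
Proof.
rewrite -[n]odd_double_half -mul2n addnC.
by case: (odd n); [exact: ParityOdd | rewrite addn0; exact: ParityEven].
Qed.

Definition merge_bound (a b : nat) : Prop :=
  bal_colless (a + b) <= bal_colless a + bal_colless b + (maxn a b - minn a b).

Lemma merge_boundC a b : merge_bound a b -> merge_bound b a.
Proof. by rewrite /merge_bound addnC maxnC minnC [bal_colless a + _]addnC. Qed.

Section MergeStep.

Variable n : nat.
Hypothesis IH : forall a b, a + b < n -> merge_bound a b.

Lemma merge_bound_even_even x y : 2 * x + 2 * y <= n -> merge_bound (2 * x) (2 * y).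
Proof.
move=> le_n; rewrite /merge_bound -mulnDr !bal_colless_double.
have [->|xy_gt0] := posnP (x + y); first by [].
by have := @IH x y ltac:(lia); rewrite /merge_bound; lia.
Qed.

Lemma merge_bound_even_odd x y :
  2 * x + (2 * y + 1) <= n -> merge_bound (2 * x) (2 * y + 1).
Proof.
move=> le_n; rewrite /merge_bound.
have [->|x_gt0] := posnP x; first by rewrite muln0 add0n; lia.
rewrite (_ : 2 * x + _ = 2 * (x + y) + 1) 1?bal_colless_odd ?bal_colless_double; try lia.
have [->|y_gt0] := posnP y.
  have := @IH x 1 ltac:(lia).
  by rewrite /merge_bound muln0 !add0n addn0 bal_colless1; lia.
have := @IH x y ltac:(lia); have := @IH x (y + 1) ltac:(lia).
by rewrite /merge_bound bal_colless_odd // addnA; lia.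
Qed.

Lemma merge_bound_odd_odd x y :
  2 * x + 1 + (2 * y + 1) <= n -> merge_bound (2 * x + 1) (2 * y + 1).
Proof.
wlog le_xy : x y / x <= y.
  move=> wlog_xy le_n; have [/wlog_xy|/ltnW/wlog_xy case_yx] := leqP x y; first exact.
  by apply/merge_boundC/case_yx; lia.
move=> le_n; rewrite /merge_bound (_ : _ + _ = 2 * (x + y + 1)) ?bal_colless_double; last by lia.
have [->|x_gt0] := posnP x.
  have [->|y_gt0] := posnP y; first by [].
  have := @IH y 1 ltac:(lia).
  by rewrite /merge_bound muln0 !add0n bal_colless1 bal_colless_odd //; lia.
have := @IH x (y + 1) ltac:(lia); have := @IH (x + 1) y ltac:(lia).
by rewrite /merge_bound addnA addnAC !bal_colless_odd //; lia.
Qed.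

End MergeStep.

Lemma bal_colless_merge a b : merge_bound a b.
Proof.
have [n le_ab] : exists n, a + b <= n by exists (a + b).
elim/ltn_ind: n a b le_ab => n IH a b le_ab.
have {}IH a' b' : a' + b' < n -> merge_bound a' b' by move=> lt_n; apply: IH lt_n _ _ _.
case: a / parityP le_ab => x; case: b / parityP => y le_n.
- exact: (merge_bound_even_even IH le_n).
- exact: (merge_bound_even_odd IH le_n).
- by apply/merge_boundC/(merge_bound_even_odd IH); rewrite addnC.
- exact: (merge_bound_odd_odd IH le_n).
Qed.

Lemma bal_colless_le_colless t : bal_colless (leaves t) <= colless t.
Proof.
elim: t => //= l IHl r IHr.
by have := bal_colless_merge (leaves l) (leaves r); rewrite /merge_bound; lia.
Qed.

Lemma bal_tree_exists n : 0 < n -> exists2 t, leaves t = n & colless t = bal_colless n.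
Proof.
elim/ltn_ind: n => n IH n_gt0; have [n_le1|n_gt1] := leqP n 1.
  by exists Leaf; rewrite (_ : n = 1) //; lia.
case: n / parityP IH n_gt0 n_gt1 => x IH _ x_gt0.
  have [t lt ct] := IH x ltac:(lia) ltac:(lia).
  exists (Node t t); rewrite /= lt ?ct ?bal_colless_double; lia.
have [t1 lt1 ct1] := IH (x + 1) ltac:(lia) ltac:(lia).
have [t2 lt2 ct2] := IH x ltac:(lia) ltac:(lia).
exists (Node t1 t2); rewrite /= lt1 lt2 ?ct1 ?ct2 ?bal_colless_odd; lia.
Qed.

Lemma min_collessE n : 0 < n -> min_colless n = bal_colless n.
Proof.
case: n => // m _; rewrite /= /min_colless_succ.
case: ex_minnP => c /asboolP [t [lt <-]] c_min; apply/anti_leq/andP; split.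
  have [t' lt' ct'] := bal_tree_exists (ltn0Sn m).
  by apply: c_min; apply/asboolP; exists t'.
by rewrite -lt bal_colless_le_colless.
Qed.

Lemma bal_colless_pow2 k : bal_colless (2 ^ k) = 0.
Proof. by elim: k => // k IH; rewrite expnS bal_colless_double IH. Qed.

Lemma bal_colless_pow2D1 k : bal_colless (2 ^ k + 1) = k.
Proof.
elim: k => // k IH.
by rewrite expnS bal_colless_odd ?expn_gt0 // bal_colless_pow2 IH add0n addn1.
Qed.

Lemma bal_colless_pow2B1 k : bal_colless (2 ^ k.+1 - 1) = k.
Proof.
elim: k => // k IH; have p_gt0 : 0 < 2 ^ k by rewrite expn_gt0.
rewrite (_ : 2 ^ k.+2 - 1 = 2 * (2 ^ k.+1 - 1) + 1); last by rewrite !expnS; lia.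
rewrite bal_colless_odd; last by rewrite expnS; lia.
by rewrite IH subnK ?expn_gt0 // bal_colless_pow2 addn0 addn1.
Qed.

Lemma bal_colless_mirror k j :
  j <= 2 ^ k -> bal_colless (2 ^ k + j) = bal_colless (2 ^ k.+1 - j).
Proof.
elim: k j => [|k IH] j; first by case: j => [|[|[|]]].
have p_gt0 : 0 < 2 ^ k by rewrite expn_gt0.
move: IH; rewrite ![2 ^ k.+2]expnS !expnS => IH.
case: j / parityP => i le_i.
  by rewrite -!mulnDr -mulnBr !bal_colless_double IH //; lia.
rewrite (_ : _ + _ = 2 * (2 ^ k + i) + 1); last by lia.
rewrite (_ : _ - _ = 2 * (2 * 2 ^ k - i.+1) + 1); last by lia.
rewrite !bal_colless_odd; try lia.
rewrite IH; last by lia.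
rewrite -[2 ^ k + i + 1]addnA IH; last by lia.
by rewrite [i + 1]addn1 [_ - i.+1 + 1]addn1 subnSK; lia.
Qed.

Theorem proposition1 :
  (forall k : nat, min_colless (2 ^ k + 1) = k) /\
  (forall k : nat, 1 <= k -> min_colless (2 ^ k - 1) = k - 1) /\
  (forall k j : nat, 1 <= k -> 1 <= j -> j <= 2 ^ (k - 1) - 1 ->
     min_colless (2 ^ (k - 1) + j) = min_colless (2 ^ k - j)).
Proof.
split; [|split].
- by move=> k; rewrite min_collessE ?addn1 // -addn1 bal_colless_pow2D1.
- case=> // k _; have p_gt0 : 0 < 2 ^ k by rewrite expn_gt0.
  by rewrite min_collessE ?bal_colless_pow2B1 ?subn1 // expnS; lia.
- case=> // k j _ j_gt0; rewrite subSS subn0 => le_j.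
  have p_gt0 : 0 < 2 ^ k by rewrite expn_gt0.
  rewrite !min_collessE ?bal_colless_mirror ?expnS //; lia.
Qed.
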